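(* Suppose $F$ satisfies Assumption A1, $F\in MDA(\Lambda)$, Assumption A3, and $x_F=\infty$; let $u=\bar F/f$. For a threshold $a$ set $\beta=\bar F(a)$, $\eta=f(a)$, $\nu=-f'(a)$, and let $z^*(a,b)$ be the optimal value of $$\sup_g\int_b^\infty g(x)dx\ \text{ s.t. }\int_a^\infty g=\beta,\ g(a)=g(a+)=\eta,\ g'_+(a)\ge-\nu,\ g\text{ convex and }\ge0\text{ on }[a,\infty).$$ Fix $x\ge0$ and let $b=a+xu(a)$. Then $$\lim_{a\to\infty}\frac{z^*(a,b)}{\bar F(b)}=\begin{cases}\frac12e^x&\text{if }x\ge1,\\ \left(1-x+\frac12x^2\right)e^x&\text{if }x<1.\end{cases}$$
   Context: $X$ is a continuous random variable with distribution function $F$, density $f$, $\bar F=1-F$, right endpoint $x_F=\sup\{x:F(x)<1\}$. $\Lambda(x)=\exp\{-e^{-x}\}$. $F\in MDA(\Lambda)$ means there exist $c_n>0$, $d_n$ with $c_n^{-1}(M_n-d_n)$ converging in distribution to $\Lambda$, $M_n$ the maximum of $n$ i.i.d. copies of $X$. Assumption A1: there exists $z<x_F$ such that on $(z,x_F)$, $F$ is twice differentiable and $f$ is positive, decreasing and convex. Assumption A3: $\lim_{x\uparrow x_F}\bar F(x)f'(x)/f(x)^2=-1$. $g(a+)$ is the right limit and $g'_+$ the right derivative. *)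

From Stdlib Require Import Reals.
From Coquelicot Require Import Coquelicot.
Open Scope R_scope.

Definition is_cont_cdf_with_density (F f : R -> R) : Prop :=
  (forall x y, x <= y -> F x <= F y) /\
  (forall x, continuous F x) /\
  is_lim F m_infty 0 /\ is_lim F p_infty 1 /\
  (forall x, 0 <= f x) /\
  (forall x, is_RInt_gen f (Rbar_locally m_infty) (at_point x) (F x)).

Definition Lambda (x : R) : R := exp (- exp (- x)).

(* F in MDA(Lambda): there are c_n > 0, d_n such that c_n^{-1}(M_n - d_n)
   converges in distribution to Lambda; since Lambda is continuous and
   P(c_n^{-1}(M_n - d_n) <= t) = F(c_n t + d_n)^n, this is pointwise
   convergence at every t. *)
Definition MDA_Lambda (F : R -> R) : Prop :=
  exists c d : nat -> R, (forall n, 0 < c n) /\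
    forall t, is_lim_seq (fun n => (F (c n * t + d n)) ^ n) (Lambda t).

Definition AssumptionA1 (F f f' : R -> R) : Prop :=
  exists z : R,
    (forall x, z < x -> is_derive F x (f x)) /\
    (forall x, z < x -> is_derive f x (f' x)) /\
    (forall x, z < x -> 0 < f x) /\
    (forall x y, z < x -> x <= y -> f y <= f x) /\
    (forall x y t, z < x -> z < y -> 0 <= t <= 1 ->
        f (t * x + (1 - t) * y) <= t * f x + (1 - t) * f y).

Definition AssumptionA3 (F f f' : R -> R) : Prop :=
  is_lim (fun x => (1 - F x) * f' x / (f x) ^ 2) p_infty (-1).

Definition right_endpoint_infinite (F : R -> R) : Prop := forall x, F x < 1.

Definition feasible (a beta eta nu : R) (g : R -> R) : Prop :=
  is_RInt_gen g (at_point a) (Rbar_locally p_infty) beta /\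
  g a = eta /\
  filterlim g (at_right a) (locally eta) /\
  (exists d, filterlim (fun h => (g (a + h) - g a) / h) (at_right 0) (locally d)
             /\ - nu <= d) /\
  (forall x y t, a <= x -> a <= y -> 0 <= t <= 1 ->
        g (t * x + (1 - t) * y) <= t * g x + (1 - t) * g y) /\
  (forall x, a <= x -> 0 <= g x).

Definition zstar (F f f' : R -> R) (a b : R) : Rbar :=
  Lub_Rbar (fun v => exists g,
     feasible a (1 - F a) (f a) (- f' a) g /\
     is_RInt_gen g (at_point b) (Rbar_locally p_infty) v).

Definition limit_value (x : R) : R :=
  if Rle_dec 1 x then exp x / 2 else (1 - x + x ^ 2 / 2) * exp x.

From Stdlib Require Import Reals Lra.
From Coquelicot Require Import Coquelicot.
Open Scope R_scope.

(* A feasible g is convex with right slope at least -nu at a, so it lies above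
   the tangent line eta - nu (t - a).  Hence the mass of g on [a, b] is at least
   the area under that line on [a, a + min (b - a, eta / nu)], which bounds
   z*(a, b) above.  When eta^2 < 2 beta nu the bound is sharp: it is attained,
   or approached, by "hinges" that follow the tangent up to a + s and then
   descend linearly to 0 carrying the remaining mass.

   With u = Fbar / f and r = - Fbar f' / f^2 one has eta u = Fbar(a) and
   nu u^2 = r Fbar(a), so for b = a + x u(a) the value is
   Fbar(a) (1 - m + r m^2 / 2) with m = min (x, 1 / r).  By A3, r -> 1 and
   u' = r - 1 -> 0; since ln Fbar has derivative -1 / u and u is essentially
   constant on [a, b], Fbar(a) / Fbar(b) -> e^x. *)

Lemma is_RInt_gen_ex_RInt (g : R -> R) (a l : R) :
  is_RInt_gen g (at_point a) (Rbar_locally p_infty) l ->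
  exists M, forall y, M < y -> ex_RInt g a y.
Proof.
  intros H.
  destruct (H (fun _ => True) (filter_true)) as [Q P HQ [M HM] HP].
  exists M. intros y Hy.
  destruct (HP a y HQ (HM y Hy)) as [l' [Hl _]].
  exists l'. exact Hl.
Qed.

Lemma is_RInt_gen_at_p_infty (g : R -> R) (a M l : R) :
  (forall y, M < y -> is_RInt g a y l) ->
  is_RInt_gen g (at_point a) (Rbar_locally p_infty) l.
Proof.
  intros H P HP.
  apply Filter_prod with (fun t => t = a) (fun y => M < y).
  - reflexivity.
  - exists M. auto.
  - intros t y -> Hy. exists l. split; [apply H; auto | apply locally_singleton; auto].
Qed.

Lemma is_RInt_gen_Chasles_tail (g : R -> R) (a b l1 l2 : R) :
  a <= b ->
  is_RInt_gen g (at_point a) (Rbar_locally p_infty) l1 ->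
  is_RInt_gen g (at_point b) (Rbar_locally p_infty) l2 ->
  ex_RInt g a b /\ l1 = RInt g a b + l2.
Proof.
  intros Hab H1 H2.
  destruct (is_RInt_gen_ex_RInt g a l1 H1) as [M HM].
  assert (Hex : ex_RInt g a b).
  { apply (ex_RInt_Chasles_1 (V := R_CompleteNormedModule)) with (Rmax M b + 1).
    - pose proof (Rmax_r M b); lra.
    - apply HM. pose proof (Rmax_l M b); lra. }
  split; [exact Hex |].
  assert (H3 : is_RInt_gen g (at_point a) (Rbar_locally p_infty)
                 (plus (RInt g a b) l2)).
  { apply (is_RInt_gen_Chasles (V := R_NormedModule)) with b; auto.
    apply is_RInt_gen_at_point, (RInt_correct (V := R_CompleteNormedModule)), Hex. }
  rewrite <- (is_RInt_gen_unique (V := R_CompleteNormedModule) _ _ H1).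
  rewrite (is_RInt_gen_unique (V := R_CompleteNormedModule) _ _ H3).
  reflexivity.
Qed.

Lemma RInt_const_R (c x y : R) : RInt (fun _ => c) x y = c * (y - x).
Proof. rewrite RInt_const. apply Rmult_comm. Qed.

Lemma Rle_of_forall_small (x y K T : R) :
  0 < T -> 0 <= K -> (forall del, 0 < del < T -> x - K * del <= y) -> x <= y.
Proof.
  intros HT HK H. apply Rle_plus_epsilon. intros eps Heps.
  pose proof (Rmin_l (T / 2) (eps / (K + 1))) as Hl.
  pose proof (Rmin_r (T / 2) (eps / (K + 1))) as Hr.
  set (del := Rmin (T / 2) (eps / (K + 1))) in *.
  assert (Hd : 0 < del) by (apply Rmin_glb_lt; [lra | apply Rdiv_lt_0_compat; lra]).
  assert (HKd : K * del <= eps).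
  { apply Rmult_le_compat_l with (r := K + 1) in Hr; [| lra].
    replace ((K + 1) * (eps / (K + 1))) with eps in Hr by (field; lra).
    lra. }
  assert (HdT : del < T) by lra. specialize (H del (conj Hd HdT)). lra.
Qed.

Lemma Rmin_mult_l (k p q : R) : 0 < k -> Rmin (k * p) (k * q) = k * Rmin p q.
Proof.
  intros Hk. unfold Rmin.
  destruct (Rle_dec p q), (Rle_dec (k * p) (k * q)); try reflexivity; exfalso; apply n; nra.
Qed.


Lemma is_derive_continuity_pt (g : R -> R) (t d : R) : is_derive g t d -> continuity_pt g t.
Proof.
  intros H. apply continuity_pt_filterlim.
  apply (ex_derive_continuous (K := R_AbsRing) (V := R_NormedModule)). exists d. exact H.
Qed.

Definition affine (p q c t : R) : R := p - q * (t - c).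

Definition affine_area (p q m : R) : R := p * m - q * m ^ 2 / 2.

Lemma continuous_affine (p q c t : R) : continuous (affine p q c) t.
Proof.
  apply (ex_derive_continuous (K := R_AbsRing) (V := R_NormedModule)).
  unfold affine. auto_derive. auto.
Qed.

Lemma is_RInt_affine (p q c t1 t2 : R) :
  is_RInt (affine p q c) t1 t2 (affine_area p q (t2 - c) - affine_area p q (t1 - c)).
Proof.
  apply (is_RInt_derive (fun t => affine_area p q (t - c))).
  - intros t _. unfold affine_area, affine. auto_derive; auto. field.
  - intros t _. apply continuous_affine.
Qed.

Lemma RInt_affine (p q c t1 t2 : R) :
  RInt (affine p q c) t1 t2 = affine_area p q (t2 - c) - affine_area p q (t1 - c).
Proof. exact (is_RInt_unique _ _ _ _ (is_RInt_affine p q c t1 t2)). Qed.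

Lemma RInt_affine_from (p q c m : R) : RInt (affine p q c) c (c + m) = affine_area p q m.
Proof.
  rewrite RInt_affine. replace (c + m - c) with m by ring. replace (c - c) with 0 by ring.
  change (affine_area p q m - affine_area p q 0 = affine_area p q m :> R).
  unfold affine_area. field.
Qed.


Lemma Rabs_Rmax_sub_le (p q p' q' : R) :
  Rabs (Rmax p q - Rmax p' q') <= Rmax (Rabs (p - p')) (Rabs (q - q')).
Proof.
  unfold Rmax at 1 2. unfold Rabs.
  repeat (destruct Rle_dec || destruct Rcase_abs); unfold Rmax;
    repeat destruct Rle_dec; lra.
Qed.

Lemma continuous_Rmax (g1 g2 : R -> R) (t : R) :
  continuous g1 t -> continuous g2 t -> continuous (fun y => Rmax (g1 y) (g2 y)) t.
Proof.
  intros H1 H2. apply filterlim_locally. intros eps.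
  generalize (filter_and _ _ (proj1 (filterlim_locally _ _) H1 eps)
                             (proj1 (filterlim_locally _ _) H2 eps)).
  apply filter_imp. intros y [B1 B2].
  change (Rabs (Rmax (g1 y) (g2 y) - Rmax (g1 t) (g2 t)) < eps).
  eapply Rle_lt_trans; [apply Rabs_Rmax_sub_le |].
  apply Rmax_lub_lt; assumption.
Qed.

Lemma continuous_Rmin (g1 g2 : R -> R) (t : R) :
  continuous g1 t -> continuous g2 t -> continuous (fun y => Rmin (g1 y) (g2 y)) t.
Proof.
  intros H1 H2.
  apply (continuous_ext (fun y => - Rmax (- g1 y) (- g2 y))).
  { intros y. rewrite Ropp_Rmax, !Ropp_involutive. reflexivity. }
  apply (continuous_opp (V := R_NormedModule) (fun y => Rmax (- g1 y) (- g2 y))).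
  apply continuous_Rmax; apply (continuous_opp (V := R_NormedModule)); assumption.
Qed.

Definition convex_from (a : R) (g : R -> R) : Prop :=
  forall x y t, a <= x -> a <= y -> 0 <= t <= 1 ->
    g (t * x + (1 - t) * y) <= t * g x + (1 - t) * g y.

Lemma convex_from_affine (a p q c : R) : convex_from a (affine p q c).
Proof. intros x y t _ _ _. unfold affine. nra. Qed.

Lemma convex_from_const (a k : R) : convex_from a (fun _ => k).
Proof. intros x y t _ _ _. lra. Qed.

Lemma convex_from_Rmax (a : R) (g1 g2 : R -> R) :
  convex_from a g1 -> convex_from a g2 -> convex_from a (fun t => Rmax (g1 t) (g2 t)).
Proof.
  intros H1 H2 x y t Hx Hy Ht.
  pose proof (Rmax_l (g1 x) (g2 x)); pose proof (Rmax_r (g1 x) (g2 x)).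
  pose proof (Rmax_l (g1 y) (g2 y)); pose proof (Rmax_r (g1 y) (g2 y)).
  specialize (H1 x y t Hx Hy Ht). specialize (H2 x y t Hx Hy Ht).
  apply Rmax_lub; nra.
Qed.

(* The difference quotients of a convex function on [a, t] are bounded by the
   slope of the chord, so the right derivative at [a] is too. *)
Lemma convex_from_ge_right_tangent (g : R -> R) (a d : R) :
  convex_from a g ->
  filterlim (fun h => (g (a + h) - g a) / h) (at_right 0) (locally d) ->
  forall t, a <= t -> g a + d * (t - a) <= g t.
Proof.
  intros Hconv Hd t Ht.
  destruct (Req_dec t a) as [-> | Hne]; [lra |].
  set (c := (g t - g a) / (t - a)).
  assert (Hchord : forall h, 0 < h < t - a -> (g (a + h) - g a) / h <= c).
  { intros h Hh.
    set (lam := h / (t - a)).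
    assert (Hlam : h = lam * (t - a)) by (unfold lam; field; lra).
    assert (Hs : 0 <= lam <= 1) by (split; nra).
    pose proof (Hconv t a lam Ht (Rle_refl a) Hs) as Hc.
    replace (lam * t + (1 - lam) * a) with (a + h) in Hc by lra.
    assert (Hch : c * h = lam * (g t - g a)) by (unfold c, lam; field; lra).
    apply Rmult_le_reg_r with h; [lra |].
    replace ((g (a + h) - g a) / h * h) with (g (a + h) - g a) by (field; lra).
    lra. }
  assert (Hdc : d <= c).
  { apply (filterlim_le (F := at_right 0) (fun h => (g (a + h) - g a) / h) (fun _ => c) d c).
    - assert (Hpos : 0 < t - a) by lra.
      exists (mkposreal _ Hpos). intros h Hb Hh. apply Hchord. split; [exact Hh |].
      change (Rabs (h - 0) < t - a) in Hb. apply Rabs_lt_between in Hb. lra.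
    - exact Hd.
    - apply filterlim_const. }
  unfold c in Hdc.
  apply Rmult_le_compat_r with (r := t - a) in Hdc; [| lra].
  replace ((g t - g a) / (t - a) * (t - a)) with (g t - g a) in Hdc by (field; lra).
  lra.
Qed.

Section Optimisation.

Variables a beta eta nu : R.
Hypothesis eta_gt0 : 0 < eta.
Hypothesis nu_gt0 : 0 < nu.

Definition tail_values (b v : R) : Prop :=
  exists g, feasible a beta eta nu g /\
    is_RInt_gen g (at_point b) (Rbar_locally p_infty) v.

Definition optimal_tail (b : R) : R :=
  beta - affine_area eta nu (Rmin (b - a) (eta / nu)).

Lemma feasible_ge_tangent (g : R -> R) :
  feasible a beta eta nu g -> forall t, a <= t -> affine eta nu a t <= g t.
Proof.
  intros [_ [Hga [_ [[d [Hd Hdnu]] [Hconv _]]]]] t Ht.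
  pose proof (convex_from_ge_right_tangent g a d Hconv Hd t Ht).
  unfold affine. nra.
Qed.

Lemma tail_values_le (b v : R) : a <= b -> tail_values b v -> v <= optimal_tail b.
Proof.
  intros Hab [g [Hg Hv]].
  pose proof (feasible_ge_tangent g Hg) as Htan.
  destruct Hg as [Hint [_ [_ [_ [_ Hpos]]]]].
  destruct (is_RInt_gen_Chasles_tail g a b beta v Hab Hint Hv) as [Hex Hsplit].
  unfold optimal_tail. set (m := Rmin (b - a) (eta / nu)).
  assert (Hm : 0 <= m <= b - a).
  { split; [apply Rmin_glb; [lra | apply Rlt_le, Rdiv_lt_0_compat; lra] | apply Rmin_l]. }
  assert (Ex1 : ex_RInt g a (a + m))
    by (apply (ex_RInt_Chasles_1 (V := R_CompleteNormedModule)) with b; auto; lra).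
  assert (Ex2 : ex_RInt g (a + m) b)
    by (apply (ex_RInt_Chasles_2 (V := R_CompleteNormedModule)) with a; auto; lra).
  rewrite <- (RInt_Chasles (V := R_CompleteNormedModule) g a (a + m) b Ex1 Ex2) in Hsplit.
  assert (Hright : 0 <= RInt g (a + m) b)
    by (apply RInt_ge_0; auto; [lra | intros t Ht; apply Hpos; lra]).
  assert (Hleft : affine_area eta nu m <= RInt g a (a + m)).
  { rewrite <- (RInt_affine_from eta nu a m).
    apply RInt_le; auto; [lra | eexists; apply is_RInt_affine |].
    intros t Ht. apply Htan. lra. }
  change (plus (RInt g a (a + m)) (RInt g (a + m) b)) with
    (RInt g a (a + m) + RInt g (a + m) b) in Hsplit.
  lra.
Qed.

Hypothesis mass_large : eta ^ 2 < 2 * beta * nu.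

Section Hinge.

Variable s : R.
Hypothesis s_range : 0 < s < eta / nu.

Let h := eta - nu * s.
Let rest := beta - affine_area eta nu s.
Let k := h ^ 2 / (2 * rest).
Let e := a + s + h / k.

(* Follow the tangent line up to [a + s], then a line of slope [-k] down to
   the zero at [e], chosen so that the triangle beyond [a + s] carries exactly
   the mass [rest] still missing from [beta]. *)
Definition hinge (t : R) : R := Rmax (Rmax (affine eta nu a t) (affine h k (a + s) t)) 0.

Lemma hinge_height_pos : 0 < h.
Proof.
  destruct s_range as [_ Hs].
  apply Rmult_lt_compat_l with (r := nu) in Hs; [| lra].
  replace (nu * (eta / nu)) with eta in Hs by (field; lra).
  unfold h. lra.
Qed.

Lemma hinge_slope_bounds : 0 < k <= nu /\ 0 < rest.
Proof.
  pose proof hinge_height_pos as Hh.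
  assert (Hid : 2 * nu * rest - h ^ 2 = 2 * nu * beta - eta ^ 2)
    by (unfold rest, h, affine_area; field).
  assert (Hh2 : 0 < h ^ 2) by (apply pow_lt; lra).
  assert (Hrest : 0 < rest) by nra.
  split; [| exact Hrest].
  unfold k. split; [apply Rdiv_lt_0_compat; lra |].
  apply Rmult_le_reg_r with (2 * rest); [lra |].
  replace (h ^ 2 / (2 * rest) * (2 * rest)) with (h ^ 2) by (field; lra).
  lra.
Qed.

Lemma hinge_pieces_sub (t : R) :
  affine eta nu a t - affine h k (a + s) t = (nu - k) * (a + s - t).
Proof. unfold affine, h. ring. Qed.

Lemma hinge_second_piece (t : R) : affine h k (a + s) t = k * (e - t).
Proof.
  destruct hinge_slope_bounds as [[Hk _] _].
  unfold affine, e. field. lra.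
Qed.

Lemma hinge_eq_tangent (t : R) : t <= a + s -> hinge t = affine eta nu a t.
Proof.
  intros Ht. destruct hinge_slope_bounds as [[Hk Hknu] _].
  pose proof hinge_height_pos. pose proof (hinge_pieces_sub t).
  assert (affine eta nu a t = h + nu * (a + s - t)) by (unfold affine, h; ring).
  unfold hinge. rewrite (Rmax_left (affine eta nu a t)) by nra.
  apply Rmax_left. nra.
Qed.

Lemma hinge_eq_second (t : R) : a + s <= t <= e -> hinge t = affine h k (a + s) t.
Proof.
  intros Ht. destruct hinge_slope_bounds as [[Hk Hknu] _].
  pose proof (hinge_pieces_sub t). pose proof (hinge_second_piece t).
  unfold hinge. rewrite (Rmax_right (affine eta nu a t)) by nra.
  apply Rmax_left. nra.
Qed.

Lemma hinge_start_le_end : a + s <= e.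
Proof.
  destruct hinge_slope_bounds as [[Hk _] _]. pose proof hinge_height_pos.
  assert (0 < h / k) by (apply Rdiv_lt_0_compat; lra).
  unfold e. lra.
Qed.


Lemma hinge_eq_0 (t : R) : e <= t -> hinge t = 0.
Proof.
  intros Ht. destruct hinge_slope_bounds as [[Hk Hknu] _].
  pose proof hinge_height_pos. pose proof hinge_start_le_end.
  pose proof (hinge_pieces_sub t). pose proof (hinge_second_piece t).
  unfold hinge. apply Rmax_right. apply Rmax_lub; nra.
Qed.

Lemma hinge_le_height (t : R) : a + s <= t -> hinge t <= h.
Proof.
  intros Ht. destruct hinge_slope_bounds as [[Hk Hknu] _].
  pose proof hinge_height_pos. pose proof (hinge_pieces_sub t).
  assert (affine h k (a + s) t = h - k * (t - (a + s))) by reflexivity.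
  unfold hinge. apply Rmax_lub; [apply Rmax_lub |]; nra.
Qed.

Lemma continuous_hinge (t : R) : continuous hinge t.
Proof.
  unfold hinge.
  apply (continuous_Rmax _ (fun _ => 0)); [| apply continuous_const].
  apply continuous_Rmax; apply continuous_affine.
Qed.

Lemma ex_RInt_hinge (x y : R) : ex_RInt hinge x y.
Proof.
  apply (ex_RInt_continuous (V := R_CompleteNormedModule)). intros t _.
  apply continuous_hinge.
Qed.

Lemma RInt_hinge_short (b : R) :
  a <= b <= a + s -> RInt hinge a b = affine_area eta nu (b - a).
Proof.
  intros Hb.
  rewrite (RInt_ext _ (affine eta nu a)).
  - replace b with (a + (b - a)) at 1 by ring. apply RInt_affine_from.
  - intros t Ht. rewrite Rmin_left, Rmax_right in Ht by lra.
    apply hinge_eq_tangent. lra.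
Qed.

Lemma RInt_hinge_Chasles (x y z : R) : RInt hinge x y + RInt hinge y z = RInt hinge x z.
Proof.
  exact (RInt_Chasles (V := R_CompleteNormedModule) _ _ _ _
           (ex_RInt_hinge x y) (ex_RInt_hinge y z)).
Qed.

Lemma RInt_hinge_total (y : R) : e <= y -> RInt hinge a y = beta :> R.
Proof.
  intros Hy. destruct hinge_slope_bounds as [[Hk _] _].
  pose proof hinge_start_le_end. destruct s_range.
  assert (I1 : RInt hinge a (a + s) = affine_area eta nu s).
  { rewrite RInt_hinge_short by lra. f_equal. ring. }
  assert (I2 : RInt hinge (a + s) e = rest :> R).
  { rewrite (RInt_ext _ (affine h k (a + s))).
    - unfold e. rewrite RInt_affine_from. unfold affine_area, k. field.
      pose proof hinge_height_pos. destruct hinge_slope_bounds. split; lra.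
    - intros t Ht. rewrite Rmin_left, Rmax_right in Ht by lra.
      apply hinge_eq_second. lra. }
  assert (I3 : RInt hinge e y = 0).
  { rewrite (RInt_ext _ (fun _ => 0)).
    - rewrite RInt_const_R. apply Rmult_0_l.
    - intros t Ht. rewrite Rmin_left, Rmax_right in Ht by lra. apply hinge_eq_0. lra. }
  rewrite <- (RInt_hinge_Chasles a (a + s) y), <- (RInt_hinge_Chasles (a + s) e y).
  rewrite I1, I2, I3. unfold rest. ring.
Qed.

Lemma RInt_hinge_long (b : R) :
  a + s <= b -> RInt hinge a b <= affine_area eta nu s + h * (b - a - s).
Proof.
  intros Hb. destruct s_range.
  rewrite <- (RInt_hinge_Chasles a (a + s) b).
  rewrite RInt_hinge_short by lra. replace (a + s - a) with s by ring.
  apply Rplus_le_compat_l.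
  assert (Hc : RInt (fun _ => h) (a + s) b = h * (b - a - s) :> R)
    by (rewrite RInt_const_R; ring).
  rewrite <- Hc.
  apply RInt_le; [lra | apply ex_RInt_hinge | apply ex_RInt_const |].
  intros t Ht. apply hinge_le_height. lra.
Qed.

Lemma hinge_feasible : feasible a beta eta nu hinge.
Proof.
  pose proof hinge_start_le_end. destruct s_range as [Hs _].
  assert (Ha : hinge a = eta) by (rewrite hinge_eq_tangent by lra; unfold affine; ring).
  split; [| split; [| split; [| split; [| split]]]].
  - apply (is_RInt_gen_at_p_infty _ _ e). intros y Hy.
    rewrite <- (RInt_hinge_total y) by lra.
    apply (RInt_correct (V := R_CompleteNormedModule)), ex_RInt_hinge.
  - exact Ha.
  - rewrite <- Ha. apply (filterlim_filter_le_1 _ (filter_le_within _)).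
    apply continuous_hinge.
  - exists (- nu). split; [| lra].
    apply filterlim_ext_loc with (fun _ => - nu); [| apply filterlim_const].
    exists (mkposreal s Hs). intros x Hx Hxpos.
    change (Rabs (x - 0) < s) in Hx. apply Rabs_lt_between in Hx.
    rewrite !hinge_eq_tangent by lra. unfold affine. field. lra.
  - change (convex_from a hinge). unfold hinge.
    apply convex_from_Rmax; [apply convex_from_Rmax; apply convex_from_affine |].
    apply convex_from_const.
  - intros t _. apply Rmax_r.
Qed.

Lemma is_RInt_gen_hinge_tail (b : R) :
  is_RInt_gen hinge (at_point b) (Rbar_locally p_infty) (beta - RInt hinge a b).
Proof.
  apply (is_RInt_gen_at_p_infty _ _ (Rmax e b)). intros y Hy.
  pose proof (Rmax_l e b).
  assert (Htail : RInt hinge b y = beta - RInt hinge a b :> R).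
  { rewrite <- (RInt_hinge_total y), <- (RInt_hinge_Chasles a b y) by lra. lra. }
  rewrite <- Htail.
  apply (RInt_correct (V := R_CompleteNormedModule)), ex_RInt_hinge.
Qed.

End Hinge.

Lemma tail_values_hinge (s b : R) :
  0 < s < eta / nu -> tail_values b (beta - RInt (hinge s) a b).
Proof.
  intros Hs. exists (hinge s).
  split; [apply hinge_feasible | apply is_RInt_gen_hinge_tail]; assumption.
Qed.

(* For [b - a >= eta / nu] the supremum is not attained: the hinges with
   [s = eta / nu - del] approach it as [del] tends to 0. *)
Lemma is_lub_tail_values (b : R) : a <= b -> is_lub_Rbar (tail_values b) (optimal_tail b).
Proof.
  intros Hab. set (T := eta / nu).
  assert (HT : 0 < T) by (apply Rdiv_lt_0_compat; lra).
  assert (HeT : eta = nu * T) by (unfold T; field; lra).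
  split.
  - intros v Hv. exact (tail_values_le b v Hab Hv).
  - intros B HB.
    assert (Hlow : forall s, 0 < s < T -> Rbar_le (beta - RInt (hinge s) a b) B)
      by (intros s Hs; apply HB, tail_values_hinge; assumption).
    unfold optimal_tail. fold T.
    destruct (Rlt_or_le (b - a) T) as [Hshort | Hlong].
    + rewrite Rmin_left by lra.
      rewrite <- (RInt_hinge_short ((b - a + T) / 2)) by (unfold T in *; lra).
      apply Hlow. lra.
    + rewrite Rmin_right by lra.
      destruct B as [r | |]; [| exact I | apply (Hlow (T / 2)); lra].
      apply (Rle_of_forall_small _ _ (nu * (b - a)) T); [lra | nra |].
      intros del Hdel.
      specialize (Hlow (T - del) ltac:(lra)). simpl in Hlow.
      pose proof (RInt_hinge_long (T - del) ltac:(unfold T in *; lra) b ltac:(lra)) as Hlong'.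
      assert (Harea : affine_area eta nu T - affine_area eta nu (T - del) = nu * del ^ 2 / 2)
        by (unfold affine_area; rewrite HeT; field).
      replace (eta - nu * (T - del)) with (nu * del) in Hlong' by (rewrite HeT; ring).
      assert (0 <= nu * del * (T - del / 2)) by (apply Rmult_le_pos; nra).
      lra.
Qed.

End Optimisation.

Lemma zstar_eq_optimal_tail (F f f' : R -> R) (a b : R) :
  0 < f a -> 0 < - f' a -> f a ^ 2 < 2 * (1 - F a) * (- f' a) -> a <= b ->
  real (zstar F f f' a b) = optimal_tail a (1 - F a) (f a) (- f' a) b.
Proof.
  intros Heta Hnu Hmass Hab.
  change (zstar F f f' a b) with (Lub_Rbar (tail_values a (1 - F a) (f a) (- f' a) b)).
  rewrite (is_lub_Rbar_unique _ _ (is_lub_tail_values _ _ _ _ Heta Hnu Hmass b Hab)).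
  reflexivity.
Qed.

Definition mills_ratio (F f : R -> R) (a : R) : R := (1 - F a) / f a.

Definition von_mises_ratio (F f f' : R -> R) (a : R) : R := - ((1 - F a) * f' a / f a ^ 2).

Lemma is_lim_von_mises_ratio (F f f' : R -> R) :
  AssumptionA3 F f f' -> is_lim (von_mises_ratio F f f') p_infty 1.
Proof.
  intros HA3. unfold von_mises_ratio.
  replace (Finite 1) with (Rbar_opp (-1)) by (simpl; f_equal; ring).
  exact (is_lim_opp _ _ _ HA3).
Qed.

Lemma is_derive_survival (F f : R -> R) (t : R) :
  is_derive F t (f t) -> is_derive (fun y => 1 - F y) t (- f t).
Proof.
  intros H.
  pose proof (is_derive_minus (fun _ => 1) F t zero (f t) (is_derive_const 1 t) H) as H'.
  replace (- f t) with (minus zero (f t)) by (unfold minus, plus, opp, zero; simpl; ring).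
  exact H'.
Qed.

Lemma is_derive_mills_ratio (F f f' : R -> R) (t : R) :
  is_derive F t (f t) -> is_derive f t (f' t) -> f t <> 0 ->
  is_derive (mills_ratio F f) t (von_mises_ratio F f f' t - 1).
Proof.
  intros HF Hf Hne.
  pose proof (is_derive_div _ _ t _ _ (is_derive_survival F f t HF) Hf Hne) as H.
  replace (von_mises_ratio F f f' t - 1) with ((- f t * f t - (1 - F t) * f' t) / f t ^ 2)
    by (unfold von_mises_ratio; field; exact Hne).
  exact H.
Qed.

Lemma is_derive_ln_survival (F f : R -> R) (t : R) :
  is_derive F t (f t) -> 0 < 1 - F t -> f t <> 0 ->
  is_derive (fun y => ln (1 - F y)) t (- / mills_ratio F f t).
Proof.
  intros HF HS Hne.
  assert (Hln : is_derive ln (1 - F t) (/ (1 - F t)))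
    by (apply is_derive_Reals, derivable_pt_lim_ln, HS).
  pose proof (is_derive_comp ln (fun y => 1 - F y) t _ _ Hln (is_derive_survival F f t HF)) as H.
  replace (- / mills_ratio F f t) with (- f t * / (1 - F t))
    by (unfold mills_ratio; field; lra).
  exact H.
Qed.

Lemma ratio_near_one (p q c : R) :
  0 < p -> c <= 1 / 2 -> Rabs (q - p) <= c * p -> Rabs (p / q - 1) <= 2 * c.
Proof.
  intros Hp Hc Hqp.
  assert (Hc0 : 0 <= c) by (pose proof (Rabs_pos (q - p)); nra).
  assert (Hq : p / 2 <= q).
  { apply Rabs_le_between in Hqp. assert (c * p <= p / 2) by nra. lra. }
  replace (p / q - 1) with ((p - q) / q) by (field; lra).
  rewrite Rabs_div by lra. rewrite (Rabs_right q), Rabs_minus_sym by lra.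
  apply Rmult_le_reg_r with q; [lra |].
  replace (Rabs (q - p) / q * q) with (Rabs (q - p)) by (field; lra).
  assert (c * p <= 2 * c * q) by nra.
  lra.
Qed.

Section Asymptotics.

Variables (F f f' : R -> R) (z : R).
Hypothesis F_deriv : forall t, z < t -> is_derive F t (f t).
Hypothesis f_deriv : forall t, z < t -> is_derive f t (f' t).
Hypothesis f_pos : forall t, z < t -> 0 < f t.
Hypothesis survival_pos : forall t, 0 < 1 - F t.
Hypothesis von_mises : is_lim (von_mises_ratio F f f') p_infty 1.

Let u := mills_ratio F f.

Lemma mills_ratio_pos (t : R) : z < t -> 0 < u t.
Proof. intros Ht. apply Rdiv_lt_0_compat; [apply survival_pos | apply f_pos, Ht]. Qed.

Lemma mills_ratio_derive (t : R) : z < t -> is_derive u t (von_mises_ratio F f f' t - 1).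
Proof.
  intros Ht. apply is_derive_mills_ratio; [apply F_deriv, Ht | apply f_deriv, Ht |].
  apply Rgt_not_eq, f_pos, Ht.
Qed.

Lemma ln_survival_derive (t : R) : z < t -> is_derive (fun y => ln (1 - F y)) t (- / u t).
Proof.
  intros Ht. apply is_derive_ln_survival; [apply F_deriv, Ht | apply survival_pos |].
  apply Rgt_not_eq, f_pos, Ht.
Qed.

Lemma mills_ratio_flat_on_window (x del : R) : 0 <= x -> 0 < del ->
  exists M, z <= M /\
    forall a, M < a -> forall t, a <= t <= a + x * u a -> Rabs (u t - u a) <= del * u a.
Proof.
  intros Hx Hdel.
  assert (Hdx : 0 < del / (x + 1)) by (apply Rdiv_lt_0_compat; lra).
  destruct (proj2 (is_lim_spec _ _ _) von_mises (mkposreal _ Hdx)) as [M HM].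
  exists (Rmax z M). split; [apply Rmax_l |]. intros a Ha t Ht.
  pose proof (Rmax_l z M); pose proof (Rmax_r z M).
  destruct (MVT_gen u a t (fun y => von_mises_ratio F f f' y - 1)) as [c [Hc Hmvt]].
  - intros y Hy. rewrite Rmin_left, Rmax_right in Hy by lra. apply mills_ratio_derive. lra.
  - intros y Hy. rewrite Rmin_left, Rmax_right in Hy by lra.
    apply (is_derive_continuity_pt _ _ _ (mills_ratio_derive y ltac:(lra))).
  - rewrite Rmin_left, Rmax_right in Hc by lra.
    specialize (HM c ltac:(lra)). simpl in HM.
    pose proof (mills_ratio_pos a ltac:(lra)).
    assert (Hxu : del / (x + 1) * (x * u a) <= del * u a).
    { replace (del / (x + 1) * (x * u a)) with ((del - del / (x + 1)) * u a)
        by (field; lra).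
      apply Rmult_le_compat_r; lra. }
    rewrite Hmvt, Rabs_mult, (Rabs_right (t - a)) by lra.
    eapply Rle_trans; [| exact Hxu].
    apply Rmult_le_compat; [apply Rabs_pos | lra | lra | lra].
Qed.

Lemma ln_survival_increment (a b : R) : z < a <= b ->
  exists c, a <= c <= b /\ ln (1 - F b) - ln (1 - F a) = - (b - a) / u c.
Proof.
  intros Hab.
  destruct (MVT_gen (fun y => ln (1 - F y)) a b (fun y => - / u y)) as [c [Hc Hmvt]].
  - intros y Hy. rewrite Rmin_left, Rmax_right in Hy by lra. apply ln_survival_derive. lra.
  - intros y Hy. rewrite Rmin_left, Rmax_right in Hy by lra.
    apply (is_derive_continuity_pt _ _ _ (ln_survival_derive y ltac:(lra))).
  - rewrite Rmin_left, Rmax_right in Hc by lra.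
    exists c. split; [exact Hc |]. rewrite Hmvt.
    pose proof (mills_ratio_pos c ltac:(lra)). field. lra.
Qed.

Lemma ln_survival_ratio_lim (x : R) : 0 <= x ->
  filterlim (fun a => ln (1 - F (a + x * u a)) - ln (1 - F a))
    (Rbar_locally p_infty) (locally (- x)).
Proof.
  intros Hx. apply filterlim_locally. intros eps.
  assert (Heps : 0 < eps / (2 * (x + 1))) by (apply Rdiv_lt_0_compat; [apply cond_pos | lra]).
  pose proof (Rmin_l (1 / 2) (eps / (2 * (x + 1)))) as Hdel_half.
  pose proof (Rmin_r (1 / 2) (eps / (2 * (x + 1)))) as Hdel_eps.
  set (del := Rmin (1 / 2) (eps / (2 * (x + 1)))) in *.
  assert (Hdel : 0 < del) by (apply Rmin_glb_lt; lra).
  destruct (mills_ratio_flat_on_window x del Hx Hdel) as [M [HzM HM]].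
  exists M. intros a Ha.
  pose proof (mills_ratio_pos a ltac:(lra)) as Hua.
  assert (Hb : z < a <= a + x * u a) by (split; [lra | nra]).
  destruct (ln_survival_increment a (a + x * u a) Hb) as [c [Hc Hln]].
  pose proof (mills_ratio_pos c ltac:(lra)) as Huc.
  change (Rabs (ln (1 - F (a + x * u a)) - ln (1 - F a) - - x) < eps).
  rewrite Hln.
  replace (- (a + x * u a - a) / u c - - x) with (- x * (u a / u c - 1)) by (field; lra).
  rewrite Rabs_mult, Rabs_Ropp, (Rabs_right x) by lra.
  pose proof (ratio_near_one (u a) (u c) del Hua Hdel_half (HM a Ha c Hc)) as Hratio.
  assert (Hxe : x * (2 * del) <= x * (eps / (x + 1))).
  { apply Rmult_le_compat_l; [lra |].
    replace (eps / (x + 1)) with (2 * (eps / (2 * (x + 1)))) by (field; lra). lra. }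
  assert (Hlt : x * (eps / (x + 1)) < eps).
  { replace (x * (eps / (x + 1))) with (eps - eps / (x + 1)) by (field; lra).
    assert (0 < eps / (x + 1)) by (apply Rdiv_lt_0_compat; [apply cond_pos | lra]). lra. }
  apply Rmult_le_compat_l with (r := x) in Hratio; [| lra].
  lra.
Qed.

Lemma survival_ratio_lim (x : R) : 0 <= x ->
  filterlim (fun a => (1 - F a) / (1 - F (a + x * u a)))
    (Rbar_locally p_infty) (locally (exp x)).
Proof.
  intros Hx.
  apply (filterlim_ext (fun a => exp (- (ln (1 - F (a + x * u a)) - ln (1 - F a))))).
  - intros a.
    pose proof (survival_pos a); pose proof (survival_pos (a + x * u a)).
    rewrite Ropp_minus_distr. unfold Rminus.
    rewrite exp_plus, exp_Ropp, !exp_ln by assumption. field. lra.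
  - apply (filterlim_comp _ _ _ _ (fun y => exp (- y)) _ (locally (- x)));
      [exact (ln_survival_ratio_lim x Hx) |].
    rewrite <- (Ropp_involutive x) at 2.
    apply (continuous_exp_comp Ropp), (continuous_opp (V := R_NormedModule)), continuous_id.
Qed.

End Asymptotics.

(* [z*(a, a + x u(a)) / Fbar(a)] as a function of [r = von_mises_ratio a]. *)
Definition tail_profile (x r : R) : R := 1 - Rmin x (/ r) + r * Rmin x (/ r) ^ 2 / 2.

Lemma continuous_tail_profile (x r : R) : 0 < r -> continuous (tail_profile x) r.
Proof.
  intros Hr.
  assert (Hm : continuous (fun y => Rmin x (/ y)) r).
  { apply (continuous_Rmin (fun _ => x) Rinv); [apply continuous_const |].
    apply continuous_Rinv. lra. }
  set (m := fun y => Rmin x (/ y)) in Hm.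
  apply (continuous_plus (fun y => 1 - m y) (fun y => y * m y ^ 2 / 2)).
  - apply (continuous_minus (fun _ => 1) m); [apply continuous_const | exact Hm].
  - apply (continuous_mult (fun y => y * m y ^ 2) (fun _ => / 2)); [| apply continuous_const].
    apply (continuous_mult (fun y => y) (fun y => m y ^ 2)); [apply continuous_id |].
    apply (continuous_mult m (fun y => m y * 1)); [exact Hm |].
    apply (continuous_mult m (fun _ => 1)); [exact Hm | apply continuous_const].
Qed.

Lemma tail_profile_limit_value (x : R) : 0 <= x -> tail_profile x 1 * exp x = limit_value x.
Proof.
  intros Hx. unfold tail_profile, limit_value. rewrite Rinv_1.
  destruct (Rle_dec 1 x).
  - rewrite Rmin_right by lra. field.
  - rewrite Rmin_left by lra. field.
Qed.

(* Once [von_mises_ratio a > 1/2] the tangent triangle at [a] has area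
   [f(a)^2 / (2 (-f'(a)))] less than [Fbar(a)], so the optimisation problem
   has the explicit value of [is_lub_tail_values]. *)
Lemma zstar_window_eq (F f f' : R -> R) (a x : R) :
  0 <= x -> 0 < f a -> 0 < 1 - F a -> 1 / 2 < von_mises_ratio F f f' a ->
  real (zstar F f f' a (a + x * mills_ratio F f a))
  = (1 - F a) * tail_profile x (von_mises_ratio F f f' a).
Proof.
  intros Hx Hf HS Hr.
  set (r := von_mises_ratio F f f' a) in *. set (u := mills_ratio F f a).
  assert (Hu : 0 < u) by (apply Rdiv_lt_0_compat; lra).
  assert (Hnu : - f' a = r * f a ^ 2 / (1 - F a)) by (unfold r, von_mises_ratio; field; lra).
  assert (Hf2 : 0 < f a ^ 2) by (apply pow_lt; lra).
  assert (Hnu_pos : 0 < - f' a)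
    by (rewrite Hnu; apply Rdiv_lt_0_compat; [apply Rmult_lt_0_compat |]; lra).
  assert (Hmass : f a ^ 2 < 2 * (1 - F a) * (- f' a)).
  { rewrite Hnu.
    replace (2 * (1 - F a) * (r * f a ^ 2 / (1 - F a))) with (2 * r * f a ^ 2) by (field; lra).
    nra. }
  rewrite zstar_eq_optimal_tail by (auto; nra).
  unfold optimal_tail, tail_profile.
  replace (a + x * u - a) with (u * x) by ring.
  replace (f a / - f' a) with (u * / r) by (rewrite Hnu; unfold u, mills_ratio; field; nra).
  rewrite Rmin_mult_l by exact Hu.
  unfold affine_area. rewrite Hnu. unfold u, mills_ratio. field. lra.
Qed.

Theorem theorem6 (F f f' : R -> R) (x : R) :
  is_cont_cdf_with_density F f ->
  AssumptionA1 F f f' ->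
  MDA_Lambda F ->
  AssumptionA3 F f f' ->
  right_endpoint_infinite F ->
  0 <= x ->
  let u := fun a => (1 - F a) / f a in
  filterlim
    (fun a => real (zstar F f f' a (a + x * u a)) / (1 - F (a + x * u a)))
    (Rbar_locally p_infty) (locally (limit_value x)).
Proof.
  intros _ [z [HF [Hf [Hpos _]]]] _ HA3 Hend Hx u.
  change u with (mills_ratio F f).
  assert (HS : forall t, 0 < 1 - F t) by (intros t; specialize (Hend t); lra).
  pose proof (is_lim_von_mises_ratio F f f' HA3) as Hr.
  apply filterlim_ext_loc with
    (fun a => tail_profile x (von_mises_ratio F f f' a)
              * ((1 - F a) / (1 - F (a + x * mills_ratio F f a)))).
  - assert (Hhalf : 0 < 1 / 2) by lra.
    destruct (proj2 (is_lim_spec _ _ _) Hr (mkposreal _ Hhalf)) as [M HM].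
    exists (Rmax z M). intros a Ha.
    pose proof (Rmax_l z M); pose proof (Rmax_r z M).
    specialize (HM a ltac:(lra)). simpl in HM. apply Rabs_lt_between in HM.
    pose proof (HS (a + x * mills_ratio F f a)).
    rewrite (zstar_window_eq F f f' a x Hx (Hpos a ltac:(lra)) (HS a)) by lra.
    field. lra.
  - rewrite <- (tail_profile_limit_value x Hx).
    apply (is_lim_mult _ _ p_infty (tail_profile x 1) (exp x)); [| | exact I].
    + apply (filterlim_comp _ _ _ _ _ _ (locally 1) _ Hr).
      apply continuous_tail_profile. lra.
    + exact (survival_ratio_lim F f f' z HF Hf Hpos HS Hr x Hx).
Qed.
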